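(* Let $G$ be a graph, $B\subseteq V(G)$ and $\ell\ge 1$. Then $B$ is an $\ell$-edge-leaky forcing set of $G$ if and only if $B$ is an $(\ell-1)$-leaky forcing set of $G$ such that for every set $L\subseteq V(G)$ of $\ell-1$ vertex leaks and every $v\in V(G)\setminus B$ there exist forces $x\to v$ and $y\to v$ in $\mathcal{F}_L(B)$ with $x\neq y$.
   Context: All graphs are finite, simple and undirected. Zero forcing: a blue vertex $u$ with exactly one white neighbor $w$ may force $w$ (color it blue), written $u\to w$. From an initial blue set $B$, a forcing sequence is a chronologically ordered list of forces each valid when performed. A vertex leak is a vertex not allowed to perform any force. $B$ is an $\ell$-leaky forcing set if for every set $L\subseteq V(G)$ of at most $\ell$ vertex leaks, exhaustively applying the forcing rule from $B$ with no vertex of $L$ forcing colors all of $V(G)$ blue (a $0$-leaky forcing set is a zero forcing set). For $L\subseteq V(G)$, $\mathcal{F}_L(B)$ is the set of all forces $x\to v$ that occur in some forcing sequence from $B$ in which no vertex of $L$ performs a force. An edge leak is an edge $xy\in E(G)$ across which no force may be performed (neither $x\to y$ nor $y\to x$). $B$ is an $\ell$-edge-leaky forcing set if for every set of at most $\ell$ edge leaks, exhaustively applying the forcing rule from $B$ without forcing across leak edges colors all of $V(G)$ blue. *)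

From mathcomp Require Import all_boot.
Set Implicit Arguments. Unset Strict Implicit. Unset Printing Implicit Defensive.

(* A finite simple graph: vertex type T : finType, adjacency e : rel T,
   assumed symmetric and irreflexive (hypotheses in the theorem). *)

Section Forcing.
Variables (T : finType) (e : rel T).

(* Edge leaks are 2-element vertex sets {x,y} (edges of G); no force may be
   performed across them.  u -> w is valid w.r.t. the current blue set S if
   u is blue, u is not a vertex leak, w is white, uw is an edge that is not
   leaky, and w is the only white neighbour of u (in G). *)
Definition valid_force (Lv : {set T}) (Le : {set {set T}}) (S : {set T})
    (u w : T) : bool :=
  [&& u \in S, u \notin Lv, w \notin S, e u w, [set u; w] \notin Le &
      [forall z, (e u z && (z \notin S)) ==> (z == w)]].

Fixpoint valid_seq (Lv : {set T}) (Le : {set {set T}}) (S : {set T})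
    (s : seq (T * T)) : bool :=
  if s is f :: s' then valid_force Lv Le S f.1 f.2 && valid_seq Lv Le (f.2 |: S) s'
  else true.

Fixpoint after (S : {set T}) (s : seq (T * T)) : {set T} :=
  if s is f :: s' then after (f.2 |: S) s' else S.

Definition stalled (Lv : {set T}) (Le : {set {set T}}) (S : {set T}) : bool :=
  [forall u, forall w, ~~ valid_force Lv Le S u w].

Definition colors_all (Lv : {set T}) (Le : {set {set T}}) (B : {set T}) : Prop :=
  forall s, valid_seq Lv Le B s -> stalled Lv Le (after B s) ->
    after B s = [set: T].

Definition leaky_forcing_set (B : {set T}) (l : nat) : Prop :=
  forall L : {set T}, #|L| <= l -> colors_all L set0 B.

Definition edge_set (Le : {set {set T}}) : Prop :=
  forall E, E \in Le -> exists x y, e x y /\ E = [set x; y].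

Definition edge_leaky_forcing_set (B : {set T}) (l : nat) : Prop :=
  forall Le : {set {set T}}, edge_set Le -> #|Le| <= l -> colors_all set0 Le B.

(* F_L(B): forces x -> v occurring in some forcing sequence from B in which
   no vertex of L performs a force. *)
Definition forces_in (L : {set T}) (B : {set T}) (x v : T) : Prop :=
  exists s, valid_seq L set0 B s /\ (x, v) \in s.

End Forcing.

From mathcomp Require Import all_boot.
From mathcomp Require Import zify.
Set Implicit Arguments. Unset Strict Implicit. Unset Printing Implicit Defensive.

(* The proof rests on the notion of the *forcers* of a blue set S: the
   vertices u that could perform a force u -> w at S if there were no leaks
   at all; such a w is unique and is written [forced_by S u].  Two facts
   about a final (stalled) blue set S then drive both directions.
   - A vertex leak at a forcer u can be simulated by the edge leak
     {u, forced_by S u}.  Hence an l-edge-leaky forcing set also colours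
     everything under any mix of at most l vertex and edge leaks; this gives
     the (l-1)-leaky property and, leaking one edge {x, v} into a vertex v,
     a second force y -> v with y <> x.
   - Conversely, if the process stalls at S under edge leaks Le, every forcer
     of S is blocked by its own leaky edge, so #|forcers S| <= #|Le| <= l.
     If there are at most l-1 forcers, leaking them as vertices stalls at S
     too, and (l-1)-leakiness forces S = V.  If there are exactly l, leaking
     all but one forcer u leaves u -> forced_by S u as the only way out of S,
     so forced_by S u has a single forcer in F_L(B), a contradiction. *)

Section Forcing.
Variables (T : finType) (e : rel T).

Implicit Types (S B Lv : {set T}) (Le : {set {set T}}) (s t : seq (T * T)).

Lemma valid_force_grow Lv Le S S' p r : S' \subset S -> r \notin S ->
  valid_force e Lv Le S' p r -> valid_force e Lv Le S p r.
Proof.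
move=> sub rS /and5P [pS' pL _ epr /andP [eL /forallP only_r]].
apply/and5P; split => //; first exact: (subsetP sub).
apply/andP; split => //; apply/forallP => z; apply/implyP => /andP [ez zS].
have zS' : z \notin S' by apply: contra zS; apply: (subsetP sub).
by move/implyP: (only_r z); apply; rewrite ez zS'.
Qed.

Lemma valid_force_target_unique Lv Lv' Le Le' S p r r' :
  valid_force e Lv Le S p r -> valid_force e Lv' Le' S p r' -> r' = r.
Proof.
move=> /and5P [_ _ _ _ /andP [_ /forallP only_r]] /and5P [_ _ r'S er' _].
by apply/eqP; move: (only_r r'); rewrite er' r'S.
Qed.

Lemma valid_force_relax Lv Lv' Le Le' S p r : p \notin Lv' -> Le' \subset Le ->
  valid_force e Lv Le S p r -> valid_force e Lv' Le' S p r.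
Proof.
move=> pLv' sub /and5P [pS _ rS epr /andP [eL only_r]].
apply/and5P; split => //; apply/andP; split => //.
by apply: contra eL; apply: (subsetP sub).
Qed.

Lemma valid_seq_relax_edges Lv Le Le' : Le' \subset Le ->
  forall t S, valid_seq e Lv Le S t -> valid_seq e Lv Le' S t.
Proof.
move=> sub; elim=> [|f t IH] S //= /andP [vf vt]; apply/andP; split; last exact: IH.
by case/and5P: (vf) => _ pL _ _ _; apply: valid_force_relax sub vf.
Qed.

Lemma sub_after t : forall S, S \subset after S t.
Proof. by elim: t => [|f t IH] S //=; apply: subset_trans (IH _); apply: subsetUr. Qed.

Lemma valid_seq_force Lv Le a b : forall t S, valid_seq e Lv Le S t -> (a, b) \in t ->
  exists2 S' : {set T}, S \subset S' & valid_force e Lv Le S' a b.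
Proof.
elim=> [|f t IH] S //= /andP [vf vt]; rewrite in_cons => /orP [/eqP ef|inb].
  by move: vf; rewrite -ef; exists S.
have [S' sub vfS'] := IH _ vt inb; exists S' => //.
by apply: subset_trans sub; apply: subsetUr.
Qed.

Lemma after_forced t : forall S v, v \in after S t -> v \notin S ->
  exists x, (x, v) \in t.
Proof.
elim: t => [|[a b] t IH] S v /=; first by move=> ->.
move=> vin vS; have [<-|bv] := eqVneq b v; first by exists a; rewrite mem_head.
have vS' : v \notin b |: S by rewrite !inE negb_or eq_sym bv vS.
by have [x inx] := IH _ _ vin vS'; exists x; rewrite in_cons inx orbT.
Qed.

Lemma exists_stalled_seq Lv Le S :
  exists t, valid_seq e Lv Le S t /\ stalled e Lv Le (after S t).
Proof.
have [n] := ubnP (#|T| - #|S|); elim: n S => [|n IH] S hS //.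
have [st|] := boolP (stalled e Lv Le S); first by exists [::].
move/forallPn=> [u /forallPn [w /negbNE vf]].
have wS : w \notin S by case/and5P: vf.
have [|t [vt st]] := IH (w |: S).
  by have := cardsU1 w S; have := max_card (w |: S); rewrite wS; lia.
by exists ((u, w) :: t); rewrite /= vf vt.
Qed.

(* A stalled blue set containing B is everything, provided the forcing
   process from B colours all vertices: that process never leaves S. *)
Lemma stalled_superset_full Lv Le B S : B \subset S -> stalled e Lv Le S ->
  colors_all e Lv Le B -> S = [set: T].
Proof.
move=> BS st full; have [t [vt stt]] := exists_stalled_seq Lv Le B.
suff : after B t \subset S.
  by rewrite (full t vt stt) => TS; apply/eqP; rewrite eqEsubset subsetT.
elim: t B BS vt {stt full} => [|[p r] t IH] S' sub //= /andP [vf vt].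
apply: IH vt; rewrite subUset sub sub1set andbT; apply/negPn/negP => rS.
by move/forallP/(_ p)/forallP/(_ r)/negP: st; apply; apply: valid_force_grow vf.
Qed.

Lemma only_escape_force Lv Le S u w z :
  (forall p r, valid_force e Lv Le S p r -> p = u /\ r = w) -> w \notin S ->
  forall t S', S' \subset S -> valid_seq e Lv Le S' t -> (z, w) \in t -> z = u.
Proof.
move=> only_uw wS; elim=> [|[p r] t IH] S' sub //= /andP [vf vt].
have [rS|rS] := boolP (r \in S).
  rewrite in_cons => /orP [/eqP [_ wr]|inz]; first by move: wS; rewrite wr rS.
  by apply: IH vt inz; rewrite subUset sub1set rS sub.
have [-> rw] := only_uw p r (valid_force_grow sub rS vf).
rewrite in_cons => /orP [/eqP [-> _] //|inz].
have [S'' sub' /and5P [_ _ wS'' _ _]] := valid_seq_force vt inz.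
by move: wS''; rewrite (subsetP sub') // -rw !inE eqxx.
Qed.

Lemma colors_all_forced Lv Le B v : colors_all e Lv Le B -> v \notin B ->
  exists x s, valid_seq e Lv Le B s /\ (x, v) \in s.
Proof.
move=> full vB; have [s [vs st]] := exists_stalled_seq Lv Le B.
have vin : v \in after B s by rewrite (full s vs st) inE.
by have [x inx] := after_forced vin vB; exists x, s.
Qed.

Definition forcers S : {set T} := [set u | [exists w, valid_force e set0 set0 S u w]].

Definition forced_by S (u : T) : T := odflt u [pick w | valid_force e set0 set0 S u w].

Lemma forced_byP S u : u \in forcers S -> valid_force e set0 set0 S u (forced_by S u).
Proof.
rewrite inE => /existsP [w vw]; rewrite /forced_by.
by case: pickP => [w' //|none]; move: (none w); rewrite vw.
Qed.

Lemma forcer_valid Lv Le S p r : valid_force e Lv Le S p r -> p \in forcers S.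
Proof.
move=> vf; rewrite inE; apply/existsP; exists r.
by apply: valid_force_relax vf; rewrite ?inE ?sub0set.
Qed.

Lemma forced_by_valid Lv Le S p r : valid_force e Lv Le S p r -> forced_by S p = r.
Proof.
by move=> vf; apply: valid_force_target_unique vf (forced_byP (forcer_valid vf)).
Qed.

(* Distinct forcers give distinct edges: a forcer is blue, its target white. *)
Lemma forcer_edge_inj S : {in forcers S &, injective (fun u => [set u; forced_by S u])}.
Proof.
move=> u u' uF u'F eq_edge.
have : u \in [set u'; forced_by S u'] by rewrite -eq_edge !inE eqxx.
rewrite !inE => /orP [/eqP // | /eqP uW].
have /and5P [uS _ _ _ _] := forced_byP uF.
by have /and5P [_ _ + _ _] := forced_byP u'F; rewrite -uW uS.
Qed.

(* A process stalled under edge leaks Le has every forcer blocked by its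
   leaky edge, so it has at most #|Le| forcers. *)
Lemma card_forcers_stalled Le S : stalled e set0 Le S -> #|forcers S| <= #|Le|.
Proof.
move=> st; rewrite -(card_in_imset (@forcer_edge_inj S)); apply: subset_leq_card.
apply/subsetP => _ /imsetP [u uF ->]; apply/negPn/negP => notLe.
move/forallP/(_ u)/forallP/(_ (forced_by S u))/negP: st; apply.
case/and5P: (forced_byP uF) => ? ? ? ? /andP [_ ?].
by apply/and5P; split => //; apply/andP; split.
Qed.

Lemma stalled_forcers S : stalled e (forcers S) set0 S.
Proof.
apply/forallP => p; apply/forallP => r; apply/negP => vf.
by case/and5P: (vf) => _ /negP notF _ _ _; apply/notF/forcer_valid/vf.
Qed.

(* Vertex leaks can be traded for edge leaks: an l-edge-leaky forcing set
   colours everything under any mix of at most l vertex and edge leaks. *)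
Lemma edge_leaky_mixed_leaks B Lv Le0 l : edge_leaky_forcing_set e B l ->
  edge_set e Le0 -> #|Le0| + #|Lv| <= l -> colors_all e Lv Le0 B.
Proof.
move=> hEL hE hc s vs st; set S := after B s.
set U := Lv :&: forcers S.
pose Le := Le0 :|: [set [set u; forced_by S u] | u in U].
have UF u : u \in U -> u \in forcers S by rewrite inE => /andP [].
have hLe : edge_set e Le.
  move=> E; rewrite inE => /orP [/hE //|/imsetP [u uU ->]].
  by exists u, (forced_by S u); case/and5P: (forced_byP (UF u uU)).
have hcLe : #|Le| <= l.
  have := cardsU Le0 [set [set u; forced_by S u] | u in U].
  have := leq_imset_card (fun u => [set u; forced_by S u]) U.
  have : #|U| <= #|Lv| by apply/subset_leq_card/subsetIl.
  move: hc; rewrite /Le; set X := [set _ | _ in U].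
  move: #|Le0 :|: X| #|Le0 :&: X| #|X| #|U| => *; lia.
have stS : stalled e set0 Le S.
  apply/forallP => p; apply/forallP => r; apply/negP => vf.
  have [pLv|pLv] := boolP (p \in Lv).
    have pU : p \in U by rewrite inE pLv (forcer_valid vf).
    case/and5P: (vf) => _ _ _ _ /andP [/negP notLe _]; apply: notLe.
    rewrite inE; apply/orP; right.
    by apply/imsetP; exists p; rewrite ?(forced_by_valid vf).
  move/forallP/(_ p)/forallP/(_ r)/negP: st; apply.
  exact: valid_force_relax (subsetUl _ _) vf.
exact: stalled_superset_full (sub_after s B) stS (hEL Le hLe hcLe).
Qed.

(* Forward direction, second part: under at most l-1 vertex leaks every white
   vertex v has two distinct forcers; leaking the edge of a first force
   x -> v makes some y <> x force v. *)
Lemma edge_leaky_two_forcers B (L : {set T}) l v : 1 <= l ->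
  edge_leaky_forcing_set e B l -> #|L| <= l.-1 -> v \notin B ->
  exists x y, x != y /\ forces_in e L B x v /\ forces_in e L B y v.
Proof.
move=> hl hEL hL vB.
have edge0 : edge_set e set0 by move=> E; rewrite inE.
have [x [s0 [vs0 inx]]] : exists x : T, forces_in e L B x v.
  have full : colors_all e L set0 B.
    by apply: edge_leaky_mixed_leaks hEL edge0 _; rewrite cards0; lia.
  by have [x [s ?]] := colors_all_forced full vB; exists x, s.
have exv : e x v by have [S' _ /and5P [_ _ _ ? _]] := valid_seq_force vs0 inx.
have edge1 : edge_set e [set [set x; v]].
  by move=> E; rewrite inE => /eqP ->; exists x, v.
have full : colors_all e L [set [set x; v]] B.
  by apply: edge_leaky_mixed_leaks hEL edge1 _; rewrite cards1; lia.
have [y [s [vs iny]]] := colors_all_forced full vB.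
have fy : forces_in e L B y v.
  by exists s; split => //; apply: valid_seq_relax_edges vs; apply: sub0set.
exists y, x; split; last by split => //; exists s0.
have [S' _ /and5P [_ _ _ _ /andP [notLe _]]] := valid_seq_force vs iny.
by apply: contra notLe => /eqP ->; rewrite inE.
Qed.

Lemma leaky_others_unique_forcer B S u z : B \subset S -> u \in forcers S ->
  forces_in e (forcers S :\ u) B z (forced_by S u) -> z = u.
Proof.
move=> BS uF [t [vt inz]].
have /and5P [_ _ wS _ _] := forced_byP uF.
apply: only_escape_force BS vt inz => // p r vf.
have pF := forcer_valid vf; have /and5P [_ pL _ _ _] := vf.
have pu : p = u by move: pL; rewrite in_setD1 pF andbT negbK => /eqP.
by split=> //; rewrite -(forced_by_valid vf) pu.
Qed.

Lemma two_forcers_edge_leaky B l : leaky_forcing_set e B l.-1 ->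
  (forall L : {set T}, #|L| <= l.-1 -> forall v, v \notin B ->
     exists x y, x != y /\ forces_in e L B x v /\ forces_in e L B y v) ->
  edge_leaky_forcing_set e B l.
Proof.
move=> hLk two Le hE hc s vs st; set S := after B s.
have BS : B \subset S by apply: sub_after.
(* The edge leaks alone stall the process at S, bounding the forcers. *)
have hF : #|forcers S| <= l.
  apply: leq_trans hc; apply: card_forcers_stalled.
  apply/forallP => p; apply/forallP => r; apply/negP => vf.
  move/forallP/(_ p)/forallP/(_ r)/negP: st; apply.
  by apply: valid_force_relax vf; rewrite ?inE ?subxx.
have [small|big] := leqP #|forcers S| l.-1.
  exact: stalled_superset_full BS (stalled_forcers S) (hLk _ small).
have [u uF] : exists u, u \in forcers S by apply/card_gt0P; lia.
have hL : #|forcers S :\ u| <= l.-1 by have := cardsD1 u (forcers S); rewrite uF; lia.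
have wB : forced_by S u \notin B.
  have /and5P [_ _ wS _ _] := forced_byP uF.
  by apply: contra wS; apply: (subsetP BS).
have [x [y [xy [fx fy]]]] := two _ hL _ wB.
by move: xy; rewrite (leaky_others_unique_forcer BS uF fx)
  (leaky_others_unique_forcer BS uF fy) eqxx.
Qed.

End Forcing.

Theorem theorem2p3 (T : finType) (e : rel T)
    (e_sym : symmetric e) (e_irr : irreflexive e)
    (B : {set T}) (l : nat) (hl : 1 <= l) :
  edge_leaky_forcing_set e B l <->
  (leaky_forcing_set e B l.-1 /\
   forall L : {set T}, #|L| <= l.-1 ->
     forall v, v \notin B ->
       exists x y, x != y /\ forces_in e L B x v /\ forces_in e L B y v).
Proof.
split; last by case; apply: two_forcers_edge_leaky.
move=> hEL; split; last by move=> L hL v vB; apply: edge_leaky_two_forcers hEL hL vB.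
move=> L hL; apply: edge_leaky_mixed_leaks hEL _ _; first by move=> E; rewrite inE.
by rewrite cards0; lia.
Qed.
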